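(* Let $S$ be a Riemannian circle and consider a tightening sequence for $S$ with tightened segments $Q_i$ and maps $\pi^{(i)}\colon S\to S_i$. If the tightening sequence is completely disjoint and $\sum_{i=0}^\infty|Q_i|<|S|$, then $\delta(x,y)=\lim_{i\to\infty}d_{S_i}(\pi^{(i)}(x),\pi^{(i)}(y))$ (for $x,y\in S$) is a well-defined pseudometric on $S$, and the induced metric quotient $S_\infty$ of $(S,\delta)$ is a Riemannian circle of length $\lim_{i\to\infty}|S_i|$.
   Context: A Riemannian circle is a circle with its length metric, of length $|S|$. Tightening sequence for $S$: Riemannian circles $S_0=S,S_1,\dots$, spaces $P_0,P_1,\dots$ (each a compact interval or Riemannian circle), maps $\iota_i\colon P_i\hookrightarrow S_i$, $\varphi_i\colon P_i\to S_{i+1}$, such that for each $i$ either (a) $\iota_i,\varphi_i$ are continuous unit-speed paths, $\varphi_i$ is injective on the interior $\mathring P_i$, $|P_i|\ge|S|/2$, $|S_{i+1}|<|S_i|$; or (b) $P_i=S_i=S_{i+1}$ with $\iota_i,\varphi_i$ identities. In case (a), $Q_i=S_i\setminus\iota_i(\mathring P_i)$ and $\bar Q_i=S_{i+1}\setminus\varphi_i(\mathring P_i)$ are closed segments with $|\bar Q_i|<|Q_i|$; in case (b) $Q_i=\bar Q_i=\emptyset$. The map $\pi_i\colon S_i\to S_{i+1}$ is $\varphi_i\circ\iota_i^{-1}$ on $\iota_i(P_i)$ and affine from $Q_i$ onto $\bar Q_i$; $\pi^{(i)}=\pi_{i-1}\circ\cdots\circ\pi_0$ ($\pi^{(0)}=\mathrm{id}$).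 Let $\mathring P_{0,0}=S$, $\mathring P_{0,j+1}=\mathring P_{0,j}\cap\iota_j(\mathring P_j)$ (viewing $\mathring P_{0,j}\subset S_j$). The sequence is completely disjoint if $Q_i\subset\mathring P_{0,i}$ in $S_i$ for every $i$. *)

From Stdlib Require Import Reals Lra ZArith List.
Open Scope R_scope.

(* A Riemannian circle of length L > 0 is modelled as R / L Z.
   Points are represented by real numbers; two reals represent the same
   point iff they are congruent modulo L. *)
Definition eqmod (L x y : R) : Prop := exists k : Z, x - y = IZR k * L.

Definition cdist (L x y : R) : R :=
  L * Rmin (frac_part ((x - y) / L)) (1 - frac_part ((x - y) / L)).

(* partitions  s = t_0 <= t_1 <= ... <= t_n = t  of [s,t], given as the list [t_1;...;t_n] *)
Fixpoint chain (s : R) (l : list R) (t : R) : Prop :=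
  match l with
  | nil => s = t
  | y :: l' => s <= y /\ chain y l' t
  end.

Fixpoint psum (L : R) (g : R -> R) (s : R) (l : list R) : R :=
  match l with
  | nil => 0
  | y :: l' => cdist L (g s) (g y) + psum L g y l'
  end.

Definition path_length_is (L : R) (g : R -> R) (s t len : R) : Prop :=
  is_lub (fun r => exists l, chain s l t /\ r = psum L g s l) len.

Definition path_continuous (L : R) (g : R -> R) (a b : R) : Prop :=
  forall s, a <= s <= b -> forall eps, 0 < eps ->
    exists d, 0 < d /\ forall t, a <= t <= b -> Rabs (t - s) < d ->
      cdist L (g s) (g t) < eps.

Definition unit_speed (L : R) (g : R -> R) (a b : R) : Prop :=
  a <= b /\ path_continuous L g a b /\
  forall s t, a <= s -> s <= t -> t <= b -> path_length_is L g s t (t - s).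

Definition inj_closed (L : R) (g : R -> R) (a b : R) : Prop :=
  forall s t, a <= s <= b -> a <= t <= b -> eqmod L (g s) (g t) -> s = t.

Definition inj_open (L : R) (g : R -> R) (a b : R) : Prop :=
  forall s t, a < s < b -> a < t < b -> eqmod L (g s) (g t) -> s = t.

Definition closed_segment (L : R) (Q : R -> Prop) (q : R) (g : R -> R) : Prop :=
  0 <= q /\ unit_speed L g 0 q /\ inj_closed L g 0 q /\
  forall x, Q x <-> exists s, 0 <= s <= q /\ eqmod L x (g s).

Definition Qset (L : R) (g : R -> R) (p : R) : R -> Prop :=
  fun x => ~ exists t, 0 < t < p /\ eqmod L x (g t).

(* One step i of a tightening sequence.  L0 = |S|, Li = |S_i|, Lj = |S_{i+1}|,
   P_i = [0,p] in case (a); q = |Q_i|, qb = |Qbar_i|; pi = pi_i.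
   kind = true : case (a);  kind = false : case (b). *)
Definition tightening_step (L0 Li Lj p q qb : R) (iota phi pi : R -> R)
  (kind : bool) : Prop :=
  if kind then
    L0 / 2 <= p /\ Lj < Li /\
    unit_speed Li iota 0 p /\ inj_closed Li iota 0 p /\
    unit_speed Lj phi 0 p /\ inj_open Lj phi 0 p /\
    qb < q /\
    (forall x y, eqmod Li x y -> eqmod Lj (pi x) (pi y)) /\
    (* pi_i = phi_i o iota_i^{-1} on iota_i(P_i) *)
    (forall t, 0 <= t <= p -> eqmod Lj (pi (iota t)) (phi t)) /\
    (exists g gb, closed_segment Li (Qset Li iota p) q g /\
                  closed_segment Lj (Qset Lj phi p) qb gb /\
                  forall s, 0 <= s <= q -> eqmod Lj (pi (g s)) (gb (s * qb / q)))
  else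
    Lj = Li /\ q = 0 /\ qb = 0 /\ forall x, eqmod Li (pi x) x.

Definition tightening_sequence (L : nat -> R) (kind : nat -> bool)
  (p q qb : nat -> R) (iota phi pi : nat -> R -> R) : Prop :=
  (forall i, 0 < L i) /\
  forall i, tightening_step (L 0%nat) (L i) (L (S i)) (p i) (q i) (qb i)
              (iota i) (phi i) (pi i) (kind i).

Definition iota_int (L : nat -> R) (kind : nat -> bool) (p : nat -> R)
  (iota : nat -> R -> R) (j : nat) (x : R) : Prop :=
  if kind j then exists t, 0 < t < p j /\ eqmod (L j) x (iota j t) else True.

(* P_{0,j}^circ as a subset of S_j: P_{0,0} = S, and
   P_{0,j+1} = (P_{0,j} cap iota_j(P_j^circ)) transported to S_{j+1} (via pi_j) *)
Fixpoint Pint (L : nat -> R) (kind : nat -> bool) (p : nat -> R)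
  (iota pi : nat -> R -> R) (j : nat) : R -> Prop :=
  match j with
  | O => fun _ => True
  | S j' => fun y => exists x, Pint L kind p iota pi j' x /\
              iota_int L kind p iota j' x /\ eqmod (L (S j')) y (pi j' x)
  end.

Definition completely_disjoint (L : nat -> R) (kind : nat -> bool) (p : nat -> R)
  (iota pi : nat -> R -> R) : Prop :=
  forall i, kind i = true -> forall x, Qset (L i) (iota i) (p i) x ->
    Pint L kind p iota pi i x.

Fixpoint pi_up (pi : nat -> R -> R) (i : nat) (x : R) : R :=
  match i with
  | O => x
  | S i' => pi i' (pi_up pi i' x)
  end.

Definition pseudometric_on_circle (L0 : R) (d : R -> R -> R) : Prop :=
  (forall x x' y, eqmod L0 x x' -> d x y = d x' y) /\
  (forall x y, 0 <= d x y) /\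
  (forall x, d x x = 0) /\
  (forall x y, d x y = d y x) /\
  (forall x y z, d x z <= d x y + d y z).

(* Each step [pi_i] lifts to a monotone 1-Lipschitz map [h_i] of the real line with
   [h_i (x + L_i) = h_i x +- L_(i+1)]: unit-speed paths injective on the interior are
   isometric parametrizations of arcs, so in these coordinates [pi_i] is the identity on
   [P_i] and compresses [Q_i] affinely onto [Qbar_i].  Composing the lifts, the length in
   [S_i] of the image of an arc of [S] from [x] to [y] is nonincreasing in [i], hence
   converges to [F y - F x] for a monotone 1-Lipschitz [F] with [F (x + |S|) = F x + L_inf];
   as [d_(S_i)] is the minimum of that length and its complement, [delta (x, y)] is the
   distance of [F x] and [F y] on the circle of length [L_inf], onto which [F] is
   surjective.  Finally [L_inf >= |S| - sum |Q_i| > 0] since [L_(i+1) >= L_i - |Q_i|]. *)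

From Stdlib Require Import Reals Lra Lia ZArith IndefiniteDescription.
Open Scope R_scope.

(** * Congruence modulo the length of a circle *)

Definition is_sign (e : R) : Prop := e = 1 \/ e = -1.

Lemma is_sign_sq e : is_sign e -> e * e = 1.
Proof. intros [-> | ->]; ring. Qed.

Lemma is_sign_mul e e' : is_sign e -> is_sign e' -> is_sign (e * e').
Proof. unfold is_sign; intros [-> | ->] [-> | ->]; lra. Qed.

Lemma eqmod_refl L x : eqmod L x x.
Proof. exists 0%Z. simpl. ring. Qed.

Lemma eqmod_sym L x y : eqmod L x y -> eqmod L y x.
Proof. intros [k Hk]. exists (- k)%Z. rewrite opp_IZR. lra. Qed.

Lemma eqmod_trans L x y z : eqmod L x y -> eqmod L y z -> eqmod L x z.
Proof. intros [k Hk] [m Hm]. exists (k + m)%Z. rewrite plus_IZR. lra. Qed.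

Lemma eqmod_add_mult L x k : eqmod L (x + IZR k * L) x.
Proof. exists k. ring. Qed.

Lemma eqmod_add_sign L x e : is_sign e -> eqmod L (x + e * L) x.
Proof.
  intros [-> | ->]; [exact (eqmod_add_mult L x 1) | exact (eqmod_add_mult L x (-1))].
Qed.

Lemma eqmod_add_l L a x y : eqmod L x y -> eqmod L (a + x) (a + y).
Proof. intros [k Hk]. exists k. lra. Qed.

Lemma eqmod_sub L a a' b b' : eqmod L a a' -> eqmod L b b' -> eqmod L (a - b) (a' - b').
Proof. intros [k Hk] [m Hm]. exists (k - m)%Z. rewrite minus_IZR. lra. Qed.

Lemma eqmod_mul_sign L e x y : is_sign e -> eqmod L x y -> eqmod L (e * x) (e * y).
Proof.
  intros [-> | ->] [k Hk]; [exists k | exists (- k)%Z]; rewrite ?opp_IZR; lra.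
Qed.

Lemma eqmod_lt_eq L x y : 0 < L -> eqmod L x y -> Rabs (x - y) < L -> x = y.
Proof.
  intros HL [k Hk] H. rewrite Hk, Rabs_mult, (Rabs_pos_eq L) in H by lra.
  assert (Hk0 : Rabs (IZR k) < 1) by (apply Rmult_lt_reg_r with L; lra).
  rewrite <- abs_IZR in Hk0. apply lt_IZR in Hk0.
  assert (k = 0%Z) by lia. subst k. simpl in Hk. lra.
Qed.

Lemma eqmod_0_interval L x : 0 < L -> 0 < x < L -> ~ eqmod L x 0.
Proof.
  intros HL Hx H. apply eqmod_lt_eq in H; [lra | lra |].
  rewrite Rminus_0_r, Rabs_pos_eq; lra.
Qed.

Lemma eqmod_representative L x y : 0 < L -> exists y', eqmod L y y' /\ x <= y' < x + L.
Proof.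
  intros HL. set (n := Int_part ((y - x) / L)). exists (y - IZR n * L). split.
  - exists n. ring.
  - destruct (base_Int_part ((y - x) / L)) as [A B]. fold n in A, B.
    assert (y - x = ((y - x) / L) * L) by (field; lra). nra.
Qed.

(** * The intrinsic distance of a circle *)

Definition nearest_multiple (L d : R) : Z :=
  if Rle_dec (frac_part (d / L)) (1 - frac_part (d / L)) then Int_part (d / L)
  else (Int_part (d / L) + 1)%Z.

Definition centered (L d : R) : R := d - IZR (nearest_multiple L d) * L.

Lemma cdist_diff L x y : cdist L x y = cdist L (x - y) 0.
Proof. unfold cdist. rewrite Rminus_0_r. reflexivity. Qed.

Lemma centered_eqmod L d : eqmod L (centered L d) d.
Proof. exists (- nearest_multiple L d)%Z. unfold centered. rewrite opp_IZR. ring. Qed.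

Lemma cdist_centered L d : 0 < L -> cdist L d 0 = Rabs (centered L d).
Proof.
  intros HL. unfold centered, nearest_multiple, cdist, frac_part. rewrite Rminus_0_r.
  set (z := d / L). set (n := Int_part z).
  assert (Hd : d = z * L) by (unfold z; field; lra).
  destruct (base_fp z) as [F1 F2]. unfold frac_part in F1, F2. fold n in F1, F2.
  rewrite Hd. destruct (Rle_dec (z - IZR n) (1 - (z - IZR n))).
  - rewrite Rmin_left by lra.
    replace (z * L - IZR n * L) with (L * (z - IZR n)) by ring.
    rewrite Rabs_mult, !Rabs_pos_eq by lra. reflexivity.
  - rewrite Rmin_right, plus_IZR by lra.
    replace (z * L - (IZR n + 1) * L) with (- (L * (1 - (z - IZR n)))) by ring.
    rewrite Rabs_Ropp, Rabs_mult, !Rabs_pos_eq by lra. reflexivity.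
Qed.

Lemma cdist_attained L x y : 0 < L -> exists k, cdist L x y = Rabs (x - y - IZR k * L).
Proof.
  intros HL. exists (nearest_multiple L (x - y)).
  rewrite cdist_diff, cdist_centered by exact HL. reflexivity.
Qed.

Lemma cdist_le_shift L x y k : 0 < L -> cdist L x y <= Rabs (x - y - IZR k * L).
Proof.
  intros HL. unfold cdist, frac_part.
  set (z := (x - y) / L). set (n := Int_part z).
  assert (Hx : x - y = z * L) by (unfold z; field; lra).
  destruct (base_fp z) as [F1 F2]. unfold frac_part in F1, F2. fold n in F1, F2.
  rewrite Hx.
  replace (z * L - IZR k * L) with (L * ((z - IZR n) + IZR (n - k))) by (rewrite minus_IZR; ring).
  rewrite Rabs_mult, (Rabs_pos_eq L) by lra.
  apply Rmult_le_compat_l; [lra |].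
  destruct (Z_le_gt_dec 0 (n - k)) as [Hm | Hm].
  - apply IZR_le in Hm. rewrite Rabs_pos_eq by lra.
    apply Rle_trans with (z - IZR n); [apply Rmin_l | lra].
  - assert (IZR (n - k) <= -1) by (apply IZR_le; lia).
    rewrite Rabs_left by lra. apply Rle_trans with (1 - (z - IZR n)); [apply Rmin_r | lra].
Qed.

Lemma cdist_le_abs L x y : 0 < L -> cdist L x y <= Rabs (x - y).
Proof.
  intros HL. pose proof (cdist_le_shift L x y 0 HL) as H.
  simpl in H. rewrite Rmult_0_l, Rminus_0_r in H. exact H.
Qed.

Lemma cdist_nonneg L x y : 0 < L -> 0 <= cdist L x y.
Proof. intros HL. destruct (cdist_attained L x y HL) as [k ->]. apply Rabs_pos. Qed.

Lemma cdist_refl L x : 0 < L -> cdist L x x = 0.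
Proof.
  intros HL. apply Rle_antisym; [| apply cdist_nonneg; lra].
  pose proof (cdist_le_shift L x x 0 HL) as H.
  replace (x - x - IZR 0 * L) with 0 in H by (simpl; ring). rewrite Rabs_R0 in H. exact H.
Qed.

Lemma cdist_triangle L x y z : 0 < L -> cdist L x z <= cdist L x y + cdist L y z.
Proof.
  intros HL.
  destruct (cdist_attained L x y HL) as [k1 ->].
  destruct (cdist_attained L y z HL) as [k2 ->].
  eapply Rle_trans; [apply (cdist_le_shift L x z (k1 + k2) HL) |].
  rewrite plus_IZR.
  replace (x - z - (IZR k1 + IZR k2) * L)
    with ((x - y - IZR k1 * L) + (y - z - IZR k2 * L)) by ring.
  apply Rabs_triang.
Qed.

Lemma cdist_le_sym L x y : 0 < L -> cdist L x y <= cdist L y x.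
Proof.
  intros HL. destruct (cdist_attained L y x HL) as [k ->].
  eapply Rle_trans; [apply (cdist_le_shift L x y (- k) HL) |].
  rewrite opp_IZR, <- Rabs_Ropp. apply Req_le. f_equal. ring.
Qed.

Lemma cdist_sym L x y : 0 < L -> cdist L x y = cdist L y x.
Proof. intros HL. apply Rle_antisym; apply cdist_le_sym; exact HL. Qed.

Lemma cdist_le_eqmod_l L x x' y : 0 < L -> eqmod L x x' -> cdist L x y <= cdist L x' y.
Proof.
  intros HL [j Hj]. destruct (cdist_attained L x' y HL) as [k ->].
  eapply Rle_trans; [apply (cdist_le_shift L x y (j + k) HL) |].
  rewrite plus_IZR. apply Req_le. f_equal. lra.
Qed.

Lemma cdist_eqmod L x x' y y' : 0 < L -> eqmod L x x' -> eqmod L y y' ->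
  cdist L x y = cdist L x' y'.
Proof.
  intros HL Hx Hy.
  assert (Hl : forall a a' b, eqmod L a a' -> cdist L a b = cdist L a' b).
  { intros a a' b E. apply Rle_antisym; apply cdist_le_eqmod_l; auto using eqmod_sym. }
  rewrite (Hl x x' y Hx), (cdist_sym L x' y), (cdist_sym L x' y') by exact HL.
  apply Hl; exact Hy.
Qed.

Lemma cdist_on_interval L e : 0 < L -> 0 <= e <= L -> cdist L e 0 = Rmin e (L - e).
Proof.
  intros HL He. apply Rle_antisym.
  - apply Rmin_glb.
    + eapply Rle_trans; [apply (cdist_le_shift L e 0 0 HL) |].
      simpl. rewrite Rmult_0_l, !Rminus_0_r, Rabs_pos_eq; lra.
    + eapply Rle_trans; [apply (cdist_le_shift L e 0 1 HL) |].
      simpl. replace (e - 0 - 1 * L) with (- (L - e)) by ring.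
      rewrite Rabs_Ropp, Rabs_pos_eq; lra.
  - destruct (cdist_attained L e 0 HL) as [k ->].
    destruct (Z_le_gt_dec k 0) as [Hk | Hk].
    + assert (IZR k <= 0) by (apply IZR_le; lia).
      apply Rle_trans with e; [apply Rmin_l | rewrite Rabs_pos_eq; nra].
    + assert (1 <= IZR k) by (apply IZR_le; lia).
      apply Rle_trans with (L - e); [apply Rmin_r | rewrite Rabs_left1; nra].
Qed.

Lemma cdist_opp L d : 0 < L -> cdist L (- d) 0 = cdist L d 0.
Proof.
  intros HL. rewrite (cdist_sym L d 0 HL), (cdist_diff L 0 d).
  f_equal; ring.
Qed.

(** * Unit-speed paths *)

Lemma unit_speed_cdist_le L g T s t : 0 < L -> unit_speed L g 0 T ->
  0 <= s -> s <= t -> t <= T -> cdist L (g s) (g t) <= t - s.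
Proof.
  intros HL [_ [_ Hlen]] Hs Hst Ht. destruct (Hlen s t Hs Hst Ht) as [Hub _].
  apply Hub. exists (cons t nil). simpl. split; [auto | ring].
Qed.

Definition clamp (s t x : R) : R := Rmax s (Rmin t x).

Lemma clamp_in s t x : s <= t -> s <= clamp s t x <= t.
Proof. intros. unfold clamp, Rmax, Rmin. repeat destruct Rle_dec; lra. Qed.

Lemma clamp_id s t x : s <= x <= t -> clamp s t x = x.
Proof. intros. unfold clamp, Rmax, Rmin. repeat destruct Rle_dec; lra. Qed.

Lemma clamp_lipschitz s t x y : s <= t -> Rabs (clamp s t x - clamp s t y) <= Rabs (x - y).
Proof. intros. unfold clamp, Rmax, Rmin. repeat destruct Rle_dec; split_Rabs; lra. Qed.

Definition monotone_on (G : R -> R) (s t : R) : Prop :=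
  (forall x y, s <= x -> x <= y -> y <= t -> G x <= G y) \/
  (forall x y, s <= x -> x <= y -> y <= t -> G y <= G x).

Lemma continuous_injective_between (G : R -> R) s t : continuity G -> s < t ->
  (forall x y, s <= x <= t -> s <= y <= t -> G x = G y -> x = y) -> G s < G t ->
  forall x, s <= x <= t -> G s <= G x <= G t.
Proof.
  intros HC Hst Hinj Hlt x Hx.
  assert (Hcst : forall c, continuity (fun z => G z - c))
    by (intros c; apply continuity_minus;
        [exact HC | apply continuity_const; intros ? ?; reflexivity]).
  split.
  - destruct (Rle_dec (G s) (G x)) as [| Hn]; [assumption | exfalso].
    destruct (IVT_cor (fun z => G z - G s) x t (Hcst _)) as [z [Hz Ez]]; [lra | nra |].
    assert (z = s) by (apply Hinj; lra). assert (x = s) by lra. subst. lra.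
  - destruct (Rle_dec (G x) (G t)) as [| Hn]; [assumption | exfalso].
    destruct (IVT_cor (fun z => G z - G t) s x (Hcst _)) as [z [Hz Ez]]; [lra | nra |].
    assert (z = t) by (apply Hinj; lra). assert (x = t) by lra. subst. lra.
Qed.

Lemma continuous_injective_increasing (G : R -> R) s t : continuity G -> s < t ->
  (forall x y, s <= x <= t -> s <= y <= t -> G x = G y -> x = y) -> G s < G t ->
  forall x y, s <= x -> x <= y -> y <= t -> G x <= G y.
Proof.
  intros HC Hst Hinj Hlt x y Hx Hxy Hy.
  destruct (Req_dec x t) as [-> | Hxt]; [replace y with t by lra; lra |].
  assert (Gx : G x < G t).
  { destruct (continuous_injective_between G s t HC Hst Hinj Hlt x ltac:(lra)) as [_ [A | A]];
      [exact A | exfalso; apply Hxt, Hinj; lra]. }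
  apply (continuous_injective_between G x t HC ltac:(lra));
    [intros; apply Hinj; lra | exact Gx | lra].
Qed.

Lemma continuous_injective_monotone (G : R -> R) s t : continuity G -> s < t ->
  (forall x y, s <= x <= t -> s <= y <= t -> G x = G y -> x = y) -> monotone_on G s t.
Proof.
  intros HC Hst Hinj.
  destruct (Rtotal_order (G s) (G t)) as [H | [H | H]].
  - left. apply continuous_injective_increasing; assumption.
  - exfalso. assert (s = t) by (apply Hinj; lra). lra.
  - right. intros x y Hx Hxy Hy. apply Ropp_le_cancel.
    apply (continuous_injective_increasing (fun z => - G z) s t (continuity_opp G HC) Hst);
      [intros a b Ha Hb E; apply Hinj; auto; lra | lra | assumption ..].
Qed.

Lemma chain_le s l t : chain s l t -> s <= t.
Proof.
  revert s. induction l as [| y l IH]; simpl; intros s H; [lra |].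
  destruct H as [H1 H2]. apply IH in H2. lra.
Qed.

Lemma psum_le_monotone L g (G : R -> R) s t : monotone_on G s t ->
  (forall x y, s <= x -> x <= y -> y <= t -> cdist L (g x) (g y) <= Rabs (G y - G x)) ->
  forall l x, s <= x -> chain x l t -> psum L g x l <= Rabs (G t - G x).
Proof.
  intros Hm Hc. induction l as [| y l IH]; simpl; intros x Hx Hch.
  - subst. unfold Rminus. rewrite Rplus_opp_r, Rabs_R0. lra.
  - destruct Hch as [H1 H2]. pose proof (chain_le _ _ _ H2) as H3.
    specialize (IH y ltac:(lra) H2). specialize (Hc x y Hx H1 H3).
    enough (Rabs (G y - G x) + Rabs (G t - G y) = Rabs (G t - G x)) by lra.
    destruct Hm as [Hm | Hm];
      pose proof (Hm x y Hx H1 H3); pose proof (Hm y t ltac:(lra) H3 ltac:(lra)).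
    + rewrite !Rabs_pos_eq by lra. ring.
    + rewrite !Rabs_left1 by lra. ring.
Qed.

Section ShortArc.
Variables (L T : R) (g : R -> R) (s t : R).
Hypothesis HL : 0 < L.
Hypothesis Hcont : path_continuous L g 0 T.
Hypotheses (Hs : 0 <= s) (Hst : s <= t) (Ht : t <= T).
Hypothesis Hnear : forall x, s <= x <= t -> cdist L (g x) (g s) <= L / 4.

Definition short_lift (x : R) : R := centered L (g (clamp s t x) - g s).

Lemma short_lift_eqmod x : s <= x <= t -> eqmod L (short_lift x) (g x - g s).
Proof. intros Hx. unfold short_lift. rewrite clamp_id by exact Hx. apply centered_eqmod. Qed.

Lemma short_lift_abs x : Rabs (short_lift x) = cdist L (g (clamp s t x)) (g s).
Proof. unfold short_lift. rewrite <- cdist_centered, <- cdist_diff by exact HL. reflexivity. Qed.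

Lemma short_lift_small x : Rabs (short_lift x) <= L / 4.
Proof. rewrite short_lift_abs. apply Hnear, clamp_in, Hst. Qed.

(* Nearby values of the lift differ by less than [L], so their difference is the small
   representative of [g x - g x0]. *)
Lemma short_lift_continuous : continuity short_lift.
Proof.
  intros x0. unfold continuity_pt, continue_in, limit1_in, limit_in. simpl. unfold Rdist.
  intros eps Heps. set (c0 := clamp s t x0).
  pose proof (clamp_in s t x0 Hst) as Hc0.
  destruct (Hcont c0 ltac:(fold c0 in Hc0; lra) (Rmin eps (L / 4))
              ltac:(apply Rmin_glb_lt; lra)) as [d [Hd Hclose]].
  exists d. split; [exact Hd |]. intros x [_ Hx].
  pose proof (clamp_in s t x Hst) as Hc.
  pose proof (clamp_lipschitz s t x x0 Hst) as Hl. fold c0 in Hl.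
  specialize (Hclose (clamp s t x) ltac:(lra) ltac:(lra)).
  set (w := centered L (g (clamp s t x) - g c0)).
  assert (Hw : Rabs w < Rmin eps (L / 4)).
  { unfold w. rewrite <- cdist_centered, <- cdist_diff, cdist_sym by exact HL. exact Hclose. }
  assert (E : short_lift x - short_lift x0 = w).
  { apply (eqmod_lt_eq L); [exact HL | |].
    - apply eqmod_trans with (g (clamp s t x) - g c0); [| apply eqmod_sym, centered_eqmod].
      replace (g (clamp s t x) - g c0) with ((g (clamp s t x) - g s) - (g c0 - g s)) by ring.
      apply eqmod_sub; apply centered_eqmod.
    - pose proof (short_lift_small x). pose proof (short_lift_small x0).
      pose proof (Rmin_r eps (L / 4)). split_Rabs; lra. }
  rewrite E. pose proof (Rmin_l eps (L / 4)). lra.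
Qed.

Lemma short_lift_cdist x y : s <= x <= t -> s <= y <= t ->
  cdist L (g x) (g y) <= Rabs (short_lift y - short_lift x).
Proof.
  intros Hx Hy. rewrite cdist_sym, cdist_diff by exact HL.
  replace (g y - g x) with ((g y - g s) - (g x - g s)) by ring.
  assert (E : eqmod L ((g y - g s) - (g x - g s)) (short_lift y - short_lift x))
    by (apply eqmod_sub; apply eqmod_sym, short_lift_eqmod; assumption).
  rewrite (cdist_eqmod L _ _ 0 0 HL E (eqmod_refl L 0)), <- cdist_diff.
  apply cdist_le_abs, HL.
Qed.

End ShortArc.

(* Injectivity makes the lift monotone, so it bounds the length of [g] on [s, t]. *)
Lemma unit_speed_short_arc_interior L g T s t : 0 < L -> unit_speed L g 0 T ->
  inj_open L g 0 T -> 0 < s -> s < t -> t < T -> t - s <= L / 4 ->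
  t - s <= cdist L (g s) (g t).
Proof.
  intros HL Hu Hinj Hs Hst Ht Hshort.
  assert (Hnear : forall x, s <= x <= t -> cdist L (g x) (g s) <= L / 4).
  { intros x Hx. rewrite cdist_sym by exact HL.
    pose proof (unit_speed_cdist_le L g T s x HL Hu ltac:(lra) ltac:(lra) ltac:(lra)). lra. }
  pose proof Hu as [_ [Hcont Hlen]].
  set (G := short_lift L g s t).
  assert (HGs : G s = 0).
  { pose proof (short_lift_abs L g s t HL s) as A. fold G in A.
    rewrite clamp_id, cdist_refl in A by lra. split_Rabs; lra. }
  assert (HGinj : forall x y, s <= x <= t -> s <= y <= t -> G x = G y -> x = y).
  { intros x y Hx Hy E. apply Hinj; [lra | lra |].
    apply eqmod_sym. replace (g y) with (g s + (g y - g s)) by ring.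
    replace (g x) with (g s + (g x - g s)) by ring. apply eqmod_add_l.
    apply eqmod_trans with (G y); [apply eqmod_sym, short_lift_eqmod; exact Hy |].
    rewrite <- E. apply short_lift_eqmod; exact Hx. }
  pose proof (continuous_injective_monotone G s t
    (short_lift_continuous L T g s t HL Hcont ltac:(lra) ltac:(lra) ltac:(lra) Hnear)
    Hst HGinj) as Hmono.
  destruct (Hlen s t ltac:(lra) ltac:(lra) ltac:(lra)) as [_ Hlub].
  replace (cdist L (g s) (g t)) with (Rabs (G t - G s)).
  - apply Hlub. intros r [l [Hch ->]].
    apply (psum_le_monotone L g G s t Hmono); [| lra | exact Hch].
    intros x y Hx Hxy Hy. apply short_lift_cdist; lra.
  - rewrite HGs, Rminus_0_r. unfold G. rewrite short_lift_abs, clamp_id, cdist_sym by lra.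
    reflexivity.
Qed.

Lemma unit_speed_short_arc L g T s t : 0 < L -> unit_speed L g 0 T -> inj_open L g 0 T ->
  0 <= s -> s <= t -> t <= T -> t - s <= L / 4 -> cdist L (g s) (g t) = t - s.
Proof.
  intros HL Hu Hinj Hs Hst Ht Hshort.
  destruct (Req_dec s t) as [<- | Hne]; [rewrite cdist_refl by exact HL; ring |].
  apply Rle_antisym; [exact (unit_speed_cdist_le L g T s t HL Hu Hs Hst Ht) |].
  apply Rnot_lt_le. intros Hlt.
  set (c := cdist L (g s) (g t)) in *.
  set (e := (t - s - c) / 8).
  assert (Hc : 0 <= c) by apply cdist_nonneg, HL.
  pose proof (unit_speed_short_arc_interior L g T (s + e) (t - e) HL Hu Hinj
                ltac:(unfold e; lra) ltac:(unfold e; lra) ltac:(unfold e; lra)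
                ltac:(unfold e; lra)) as Hmid.
  pose proof (cdist_triangle L (g (s + e)) (g s) (g (t - e)) HL) as T1.
  pose proof (cdist_triangle L (g s) (g t) (g (t - e)) HL) as T2.
  pose proof (unit_speed_cdist_le L g T s (s + e) HL Hu Hs ltac:(unfold e; lra)
                ltac:(unfold e; lra)) as Hleft.
  pose proof (unit_speed_cdist_le L g T (t - e) t HL Hu ltac:(unfold e; lra)
                ltac:(unfold e; lra) Ht) as Hright.
  rewrite (cdist_sym L (g (s + e)) (g s)) in T1 by exact HL.
  rewrite (cdist_sym L (g t) (g (t - e))) in T2 by exact HL.
  fold c in T2. unfold e in *. lra.
Qed.

Lemma unit_speed_short_arc_sign L g T s t : 0 < L -> unit_speed L g 0 T -> inj_open L g 0 T ->
  0 <= s -> s <= t -> t <= T -> t - s <= L / 4 ->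
  exists e, is_sign e /\ eqmod L (g t) (g s + e * (t - s)).
Proof.
  intros HL Hu Hinj Hs Hst Ht Hshort.
  pose proof (unit_speed_short_arc L g T s t HL Hu Hinj Hs Hst Ht Hshort) as K.
  rewrite cdist_sym in K by exact HL.
  destruct (cdist_attained L (g t) (g s) HL) as [k Ek]. rewrite K in Ek.
  destruct (Rcase_abs (g t - g s - IZR k * L)).
  - rewrite Rabs_left in Ek by lra. exists (-1). split; [right; reflexivity |]. exists k. lra.
  - rewrite Rabs_right in Ek by lra. exists 1. split; [left; reflexivity |]. exists k. lra.
Qed.

Lemma sign_of_sum L x y a b c : 0 < L -> 0 < x -> 0 <= y -> x + y <= L / 4 ->
  is_sign a -> is_sign b -> is_sign c -> eqmod L (a * x + b * y) (c * (x + y)) -> a = c.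
Proof.
  intros HL Hx Hy Hxy Ha Hb Hc E.
  apply eqmod_lt_eq in E; [| exact HL |].
  - destruct Ha as [-> | ->], Hb as [-> | ->], Hc as [-> | ->]; lra.
  - destruct Ha as [-> | ->], Hb as [-> | ->], Hc as [-> | ->]; split_Rabs; lra.
Qed.

Definition straight (L : R) (g : R -> R) (c e T : R) : Prop :=
  forall t, 0 <= t <= T -> eqmod L (g t) (c + e * t).

(* The direction is read off on [0, L/8]; it then propagates in steps of [L/8],
   each time comparing the arcs from [t - L/8] and from [max 0 (t - L/4)] to [t]. *)
Lemma unit_speed_straight L g T : 0 < L -> unit_speed L g 0 T -> inj_open L g 0 T ->
  exists e, is_sign e /\ straight L g (g 0) e T.
Proof.
  intros HL Hu Hinj. assert (HT : 0 <= T) by apply Hu.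
  set (h := L / 8). set (c := Rmin h T).
  assert (Hc : 0 <= c <= h /\ c <= T)
    by (unfold c, h; pose proof (Rmin_l (L / 8) T); pose proof (Rmin_r (L / 8) T);
        split; [split; [apply Rmin_glb |] |]; lra).
  destruct (unit_speed_short_arc_sign L g T 0 c HL Hu Hinj ltac:(lra) ltac:(lra) ltac:(lra)
              ltac:(unfold h in *; lra)) as [e [He Ec]].
  exists e. split; [exact He |].
  assert (Hbase : forall t, 0 <= t <= c -> eqmod L (g t) (g 0 + e * t)).
  { intros t Ht. destruct (Req_dec t 0) as [-> | Ht0].
    { rewrite Rmult_0_r, Rplus_0_r. apply eqmod_refl. }
    destruct (unit_speed_short_arc_sign L g T 0 t HL Hu Hinj ltac:(lra) ltac:(lra)
                ltac:(lra) ltac:(unfold h in *; lra)) as [a [Ha Et]].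
    destruct (unit_speed_short_arc_sign L g T t c HL Hu Hinj ltac:(lra) ltac:(lra)
                ltac:(lra) ltac:(unfold h in *; lra)) as [b [Hb Etc]].
    replace (t - 0) with t in Et by ring. replace (c - 0) with c in Ec by ring.
    replace a with e in Et; [exact Et | symmetry].
    apply (sign_of_sum L t (c - t) a b e HL ltac:(lra) ltac:(lra) ltac:(unfold h in *; lra)
             Ha Hb He).
    destruct Ec as [k1 Hk1], Et as [k2 Hk2], Etc as [k3 Hk3].
    exists (k1 - k2 - k3)%Z. rewrite !minus_IZR. lra. }
  assert (Hsteps : forall n t, 0 <= t <= T -> t <= INR (S n) * h -> eqmod L (g t) (g 0 + e * t)).
  { induction n as [| n IH]; intros t Ht Htn.
    { apply Hbase. split; [lra | apply Rmin_glb; simpl in Htn; lra]. }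
    destruct (Rle_dec t (INR (S n) * h)) as [Hle | Hgt]; [apply IH; assumption |].
    rewrite S_INR in Htn. apply Rnot_le_lt in Hgt.
    assert (Hh : 0 < h) by (unfold h; lra).
    assert (Hth : h < t) by (rewrite S_INR in Hgt; pose proof (pos_INR n); nra).
    set (m := t - h). set (u := Rmax 0 (t - 2 * h)).
    assert (Hu0 : 0 <= u < m)
      by (unfold u, m; split; [apply Rmax_l | apply Rmax_lub_lt]; lra).
    assert (Htu : t - u <= 2 * h) by (unfold u; pose proof (Rmax_r 0 (t - 2 * h)); lra).
    assert (Em : eqmod L (g m) (g 0 + e * m)) by (apply IH; unfold m; lra).
    assert (Eu : eqmod L (g u) (g 0 + e * u)) by (apply IH; unfold m in Hu0; lra).
    destruct (unit_speed_short_arc_sign L g T m t HL Hu Hinj ltac:(lra) ltac:(unfold m; lra)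
                ltac:(lra) ltac:(unfold m, h in *; lra)) as [a [Ha E1]].
    destruct (unit_speed_short_arc_sign L g T u t HL Hu Hinj ltac:(lra) ltac:(unfold m in Hu0; lra)
                ltac:(lra) ltac:(unfold h in *; lra)) as [b [Hb E2]].
    replace b with e in E2.
    - apply eqmod_trans with (g u + e * (t - u)); [exact E2 |].
      destruct Eu as [k Hk]. exists k. lra.
    - apply (sign_of_sum L (m - u) (t - m) e a b HL ltac:(lra)
                         ltac:(unfold m; lra) ltac:(unfold h in *; lra) He Ha Hb).
      destruct Em as [k1 Hk1], Eu as [k2 Hk2], E1 as [k3 Hk3], E2 as [k4 Hk4].
      exists ((k4 + k2) - (k3 + k1))%Z. rewrite minus_IZR, !plus_IZR. lra. }
  intros t Ht. destruct (INR_unbounded (t / h)) as [n Hn].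
  apply (Hsteps n t Ht). rewrite S_INR.
  apply Rlt_le, Rlt_trans with (INR n * h); [| unfold h in *; lra].
  apply Rmult_lt_reg_r with (/ h); [apply Rinv_0_lt_compat; unfold h; lra |].
  rewrite Rmult_assoc, Rinv_r, Rmult_1_r by (unfold h; lra). exact Hn.
Qed.

Lemma inj_closed_open L g a b : inj_closed L g a b -> inj_open L g a b.
Proof. intros Hinj s t Hs Ht. apply Hinj; lra. Qed.

Lemma unit_speed_length_le L g T : 0 < L -> unit_speed L g 0 T -> inj_open L g 0 T -> T <= L.
Proof.
  intros HL Hu Hinj. destruct (unit_speed_straight L g T HL Hu Hinj) as [e [He Hg]].
  apply Rnot_lt_le. intros HTL. set (t := (T - L) / 2).
  assert (t = t + L); [| lra].
  apply Hinj; [unfold t; lra | unfold t; lra |].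
  apply eqmod_trans with (g 0 + e * t); [apply Hg; unfold t; lra |].
  apply eqmod_trans with (g 0 + e * (t + L)); [| apply eqmod_sym, Hg; unfold t; lra].
  apply eqmod_sym. replace (g 0 + e * (t + L)) with (g 0 + e * t + e * L) by ring.
  apply eqmod_add_sign, He.
Qed.

Lemma unit_speed_length_lt L g T : 0 < L -> unit_speed L g 0 T -> inj_closed L g 0 T -> T < L.
Proof.
  intros HL Hu Hinj. pose proof (inj_closed_open L g 0 T Hinj) as Hinj'.
  destruct (unit_speed_straight L g T HL Hu Hinj') as [e [He Hg]].
  pose proof (unit_speed_length_le L g T HL Hu Hinj').
  destruct (Req_dec T L) as [-> | ]; [exfalso | lra].
  assert (0 = L); [| lra].
  apply Hinj; [lra | lra |]. apply eqmod_trans with (g 0 + e * L); [| apply eqmod_sym, Hg; lra].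
  apply eqmod_sym, eqmod_add_sign, He.
Qed.

(** * The complement of an arc *)

(* The segment, in the coordinate of the arc [(0, p)]: its point of parameter [s] sits at
   [z * (s - s1)], so [s1] and [s2] are the parameters of the arc's endpoints [0] and [p]. *)
Lemma complement_arc_coordinates L p q s1 s2 z : 0 < L -> 0 < p <= L -> 0 <= q < L ->
  0 <= s1 <= q -> 0 <= s2 <= q -> is_sign z ->
  (forall s t, 0 <= s <= q -> 0 < t < p -> ~ eqmod L (z * (s - s1)) t) ->
  eqmod L p (z * (s2 - s1)) ->
  q = L - p /\ ((z = 1 /\ s1 = q) \/ (z = -1 /\ s1 = 0)).
Proof.
  intros HL Hp Hq H1 H2 Hz Hav [k Hk].
  assert (Hb : - L < z * (s2 - s1) < L) by (destruct Hz as [-> | ->]; lra).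
  assert (k = 0 \/ k = 1)%Z as [-> | ->].
  { assert (-1 < IZR k /\ IZR k < 2) as [A B] by (split; apply Rmult_lt_reg_r with L; lra).
    apply lt_IZR in A. apply lt_IZR in B. lia. }
  all: simpl in Hk.
  - exfalso. apply (Hav ((s1 + s2) / 2) (p / 2)); [lra | lra |].
    exists 0%Z. simpl. lra.
  - destruct Hz as [-> | ->].
    + assert (Hs1q : q <= s1).
      { apply Rnot_lt_le. intros Hlt. set (d := Rmin (q - s1) p / 2).
        assert (0 < d <= (q - s1) / 2 /\ d <= p / 2)
          by (unfold d; pose proof (Rmin_l (q - s1) p); pose proof (Rmin_r (q - s1) p);
              split; [split; [apply Rmult_lt_0_compat; [apply Rmin_glb_lt |] |] |]; lra).
        apply (Hav (s1 + d) d); [lra | lra |]. exists 0%Z. simpl. lra. }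
      assert (Hs1 : s1 <= L - p).
      { apply Rnot_lt_le. intros Hlt.
        apply (Hav ((s1 - L + p) / 2) ((L + p - s1) / 2)); [lra | lra |].
        exists (-1)%Z. simpl. lra. }
      split; [lra | left; split; [reflexivity | lra]].
    + assert (Hs1 : s1 = 0).
      { apply Rle_antisym; [| lra]. apply Rnot_lt_le. intros Hlt. set (d := Rmin s1 p / 2).
        assert (0 < d <= s1 / 2 /\ d <= p / 2)
          by (unfold d; pose proof (Rmin_l s1 p); pose proof (Rmin_r s1 p);
              split; [split; [apply Rmult_lt_0_compat; [apply Rmin_glb_lt |] |] |]; lra).
        apply (Hav (s1 - d) d); [lra | lra |]. exists 0%Z. simpl. lra. }
      subst s1.
      assert (Hq' : q <= L - p).
      { apply Rnot_lt_le. intros Hlt.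
        apply (Hav ((L - p + q) / 2) ((L + p - q) / 2)); [lra | lra |].
        exists (-1)%Z. simpl. lra. }
      split; [lra | right; split; reflexivity].
Qed.

Lemma straight_endpoints_outside L gam a e p : 0 < L -> 0 < p <= L -> is_sign e ->
  straight L gam a e p -> Qset L gam p a /\ Qset L gam p (a + e * p).
Proof.
  intros HL Hp He Hgam. split; intros [t [Ht E]];
    apply eqmod_trans with (z := a + e * t) in E; [| apply Hgam; lra | | apply Hgam; lra].
  - apply (eqmod_0_interval L t HL ltac:(lra)).
    destruct E as [k Hk], He as [-> | ->]; [exists (- k)%Z | exists k]; rewrite ?opp_IZR; lra.
  - apply (eqmod_0_interval L (p - t) HL ltac:(lra)).
    destruct E as [k Hk], He as [-> | ->]; [exists k | exists (- k)%Z]; rewrite ?opp_IZR; lra.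
Qed.

Lemma complement_segment L p q a e gam g : 0 < L -> 0 < p <= L -> is_sign e ->
  straight L gam a e p -> closed_segment L (Qset L gam p) q g ->
  q = L - p /\ (straight L g (a + e * p) e q \/ straight L g a (- e) q).
Proof.
  intros HL Hp He Hgam [Hq0 [Hu [Hinj HQ]]].
  pose proof (unit_speed_length_lt L g q HL Hu Hinj) as HqL.
  destruct (unit_speed_straight L g q HL Hu (inj_closed_open L g 0 q Hinj)) as [eta [Heta Hg]].
  destruct (straight_endpoints_outside L gam a e p HL Hp He Hgam) as [Qa Qb].
  destruct (proj1 (HQ a) Qa) as [s1 [Hs1 E1]].
  destruct (proj1 (HQ _) Qb) as [s2 [Hs2 E2]].
  assert (Gs : forall s, 0 <= s <= q -> eqmod L (g s) (a + eta * (s - s1))).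
  { intros s Hs. destruct (Hg s Hs) as [k1 Hk1], (Hg s1 Hs1) as [k2 Hk2], E1 as [k3 Hk3].
    exists (k1 - (k2 + k3))%Z. rewrite minus_IZR, plus_IZR. lra. }
  set (z := e * eta).
  assert (Hz : is_sign z) by (apply is_sign_mul; assumption).
  assert (Heta' : eta = e * z) by (unfold z; rewrite <- Rmult_assoc, is_sign_sq, Rmult_1_l; auto).
  assert (Hav : forall s t, 0 <= s <= q -> 0 < t < p -> ~ eqmod L (z * (s - s1)) t).
  { intros s t Hs Ht E. apply (proj2 (HQ (g s)) (ex_intro _ s (conj Hs (eqmod_refl L (g s))))).
    exists t. split; [exact Ht |].
    apply eqmod_trans with (a + eta * (s - s1)); [apply Gs, Hs |].
    apply eqmod_trans with (a + e * t); [| apply eqmod_sym, Hgam; lra].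
    apply eqmod_add_l. rewrite Heta', Rmult_assoc. apply eqmod_mul_sign; assumption. }
  assert (Hp2 : eqmod L p (z * (s2 - s1))).
  { assert (eqmod L (a + e * p) (a + eta * (s2 - s1))) as [k Hk]
      by (apply eqmod_trans with (g s2); [exact E2 | apply Gs, Hs2]).
    rewrite Heta' in Hk.
    destruct He as [-> | ->]; [exists k | exists (- k)%Z]; rewrite ?opp_IZR; lra. }
  destruct (complement_arc_coordinates L p q s1 s2 z HL Hp ltac:(lra) Hs1 Hs2 Hz Hav Hp2)
    as [Hqp Hends].
  split; [exact Hqp |].
  destruct Hends as [[Hz1 Hs1q] | [Hz1 Hs10]]; [left | right]; intros s Hs;
    apply eqmod_trans with (a + eta * (s - s1)); try (apply Gs, Hs); rewrite Heta', Hz1.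
  - rewrite Hs1q.
    replace (a + e * p + e * s) with (a + e * 1 * (s - q) + e * L) by (rewrite Hqp; ring).
    apply eqmod_sym, eqmod_add_sign, He.
  - rewrite Hs10. exists 0%Z. simpl. ring.
Qed.

Lemma straight_degenerate L g c e : eqmod L (g 0) c -> straight L g c e 0.
Proof.
  intros E t Ht. replace t with 0 by lra. rewrite Rmult_0_r, Rplus_0_r. exact E.
Qed.

Lemma eqmod_shift_full L a e p : 0 < L -> 0 < p <= L -> is_sign e ->
  eqmod L a (a + e * p) -> p = L.
Proof.
  intros HL Hp He [k Hk]. apply Rle_antisym; [lra |]. apply Rnot_lt_le. intros Hlt.
  apply (eqmod_0_interval L p HL ltac:(lra)).
  destruct He as [-> | ->]; [exists (- k)%Z | exists k]; rewrite ?opp_IZR; lra.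
Qed.

(* When both endpoints of the arc coincide the segment is a point, and either orientation
   describes it; otherwise the starting point of [g] fixes the orientation. *)
Lemma complement_segment_oriented L p q a e gam g : 0 < L -> 0 < p <= L -> is_sign e ->
  straight L gam a e p -> closed_segment L (Qset L gam p) q g ->
  q = L - p /\
  (eqmod L (g 0) (a + e * p) -> straight L g (a + e * p) e q) /\
  (eqmod L (g 0) a -> straight L g a (- e) q).
Proof.
  intros HL Hp He Hgam Hseg.
  destruct (complement_segment L p q a e gam g HL Hp He Hgam Hseg) as [Hqp [Hg | Hg]];
    (split; [exact Hqp |]); pose proof (Hg 0 ltac:(lra)) as Hg0;
    rewrite Rmult_0_r, Rplus_0_r in Hg0.
  - split; [intros _; exact Hg | intros Ha].
    pose proof (eqmod_shift_full L a e p HL Hp He (eqmod_trans L _ _ _ (eqmod_sym L _ _ Ha) Hg0)).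
    replace q with 0 by lra. apply straight_degenerate, Ha.
  - split; [intros Hb | intros _; exact Hg].
    pose proof (eqmod_shift_full L a e p HL Hp He (eqmod_trans L _ _ _ (eqmod_sym L _ _ Hg0) Hb)).
    replace q with 0 by lra. apply straight_degenerate, Hb.
Qed.

(** * One tightening step *)

Section CompressedSegment.
Variables (Li Lj p q r a e b e' : R) (pi g gb : R -> R).
Hypotheses (He : is_sign e) (He' : is_sign e') (Hp : 0 <= p) (Hq : 0 <= q) (Hr : 0 <= r <= 1).
Hypotheses (HLi : Li = p + q) (HLj : Lj = p + r * q).
Hypothesis Hwd : forall x y, eqmod Li x y -> eqmod Lj (pi x) (pi y).
Hypothesis Hpi_P : forall t, 0 <= t <= p -> eqmod Lj (pi (a + e * t)) (b + e' * t).
Hypothesis Hpi_Q : forall s, 0 <= s <= q -> eqmod Lj (pi (g s)) (gb (s * r)).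

Lemma compressed_segment_forward : straight Li g (a + e * p) e q ->
  (eqmod Lj (gb 0) (b + e' * p) -> straight Lj gb (b + e' * p) e' (r * q)) ->
  forall w, p <= w <= Li -> eqmod Lj (pi (a + e * w)) (b + e' * (r * w + (1 - r) * p)).
Proof.
  intros Hg Hgb w Hw.
  assert (Hgb' : straight Lj gb (b + e' * p) e' (r * q)).
  { apply Hgb. apply eqmod_trans with (pi (g 0)).
    - pose proof (Hpi_Q 0 ltac:(lra)) as H. rewrite Rmult_0_l in H. apply eqmod_sym, H.
    - pose proof (Hg 0 ltac:(lra)) as Hg0. rewrite Rmult_0_r, Rplus_0_r in Hg0.
      apply eqmod_trans with (pi (a + e * p)); [apply Hwd, Hg0 | apply Hpi_P; lra]. }
  set (s := w - p).
  apply eqmod_trans with (pi (g s)).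
  { apply Hwd, eqmod_sym. replace (a + e * w) with (a + e * p + e * s) by (unfold s; ring).
    apply Hg. unfold s. lra. }
  apply eqmod_trans with (gb (s * r)); [apply Hpi_Q; unfold s; lra |].
  replace (b + e' * (r * w + (1 - r) * p)) with (b + e' * p + e' * (s * r)) by (unfold s; ring).
  apply Hgb'. unfold s. split; nra.
Qed.

Lemma compressed_segment_backward : straight Li g a (- e) q ->
  (eqmod Lj (gb 0) b -> straight Lj gb b (- e') (r * q)) ->
  forall w, p <= w <= Li -> eqmod Lj (pi (a + e * w)) (b + e' * (r * w + (1 - r) * p)).
Proof.
  intros Hg Hgb w Hw.
  assert (Hgb' : straight Lj gb b (- e') (r * q)).
  { apply Hgb. apply eqmod_trans with (pi (g 0)).
    - pose proof (Hpi_Q 0 ltac:(lra)) as H. rewrite Rmult_0_l in H. apply eqmod_sym, H.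
    - pose proof (Hg 0 ltac:(lra)) as Hg0. pose proof (Hpi_P 0 ltac:(lra)) as Ha.
      rewrite Rmult_0_r, Rplus_0_r in Hg0. rewrite !Rmult_0_r, !Rplus_0_r in Ha.
      apply eqmod_trans with (pi a); [apply Hwd, Hg0 | exact Ha]. }
  set (s := Li - w).
  apply eqmod_trans with (pi (g s)).
  { apply Hwd, eqmod_sym. apply eqmod_trans with (a + - e * s); [apply Hg; unfold s; lra |].
    replace (a + e * w) with (a + - e * s + e * Li) by (unfold s; ring).
    apply eqmod_sym, eqmod_add_sign, He. }
  apply eqmod_trans with (gb (s * r)); [apply Hpi_Q; unfold s; lra |].
  apply eqmod_trans with (b + - e' * (s * r)); [apply Hgb'; unfold s; split; nra |].
  replace (b + e' * (r * w + (1 - r) * p)) with (b + - e' * (s * r) + e' * Lj)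
    by (unfold s; rewrite HLj, HLi; ring).
  apply eqmod_sym, eqmod_add_sign, He'.
Qed.

End CompressedSegment.

(* In the coordinates [w] of [S_i] along [iota_i] and of [S_{i+1}] along [phi_i], the map
   [pi_i] is the identity on [P_i = [0, p]] and the affine compression of ratio
   [r = |Qbar_i| / |Q_i|] on [Q_i = [p, L_i]]. *)
Lemma tightening_step_formula L0 Li Lj p q qb iota phi pi : 0 < L0 -> 0 < Li -> 0 < Lj ->
  tightening_step L0 Li Lj p q qb iota phi pi true ->
  exists a e b e' r, is_sign e /\ is_sign e' /\ 0 <= r <= 1 /\ 0 <= p <= Li /\
    Li = p + q /\ Lj = r * Li + (1 - r) * p /\
    forall w, 0 <= w < Li ->
      eqmod Lj (pi (a + e * w)) (b + e' * (r * w + (1 - r) * Rmin w p)).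
Proof.
  intros H0 Hi Hj
    [Hp [_ [Hiu [Hii [Hpu [Hpo [Hqb [Hwd [Hpio [g [gb [Hg [Hgb Hpg]]]]]]]]]]]]].
  pose proof (unit_speed_length_lt Li iota p Hi Hiu Hii) as HpLi.
  pose proof (unit_speed_length_le Lj phi p Hj Hpu Hpo) as HpLj.
  destruct (unit_speed_straight Li iota p Hi Hiu (inj_closed_open Li iota 0 p Hii))
    as [e [He Ei]].
  destruct (unit_speed_straight Lj phi p Hj Hpu Hpo) as [e' [He' Ep]].
  set (a := iota 0) in *. set (b := phi 0) in *.
  assert (Hqb0 : 0 <= qb) by apply Hgb.
  destruct (complement_segment Li p q a e iota g Hi ltac:(lra) He Ei Hg) as [Hq Hor].
  destruct (complement_segment_oriented Lj p qb b e' phi gb Hj ltac:(lra) He' Ep Hgb)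
    as [Hqb' [Hfwd Hbwd]].
  set (r := qb / q).
  assert (Hr : 0 <= r < 1).
  { unfold r. split; [apply Rmult_le_pos, Rlt_le, Rinv_0_lt_compat; lra |].
    apply Rmult_lt_reg_r with q; [lra |]. unfold Rdiv. rewrite Rmult_assoc, Rinv_l; lra. }
  assert (Hrq : qb = r * q) by (unfold r; field; lra).
  rewrite Hrq in Hfwd, Hbwd.
  assert (Hpi_P : forall t, 0 <= t <= p -> eqmod Lj (pi (a + e * t)) (b + e' * t)).
  { intros t Ht. apply eqmod_trans with (pi (iota t)); [apply Hwd, eqmod_sym, Ei, Ht |].
    apply eqmod_trans with (phi t); [apply Hpio, Ht | apply Ep, Ht]. }
  assert (Hpi_Q : forall s, 0 <= s <= q -> eqmod Lj (pi (g s)) (gb (s * r))).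
  { intros s Hs. unfold r, Rdiv. rewrite <- Rmult_assoc. apply Hpg, Hs. }
  exists a, e, b, e', r.
  do 4 (split; [auto; lra |]). split; [lra | split; [nra |]].
  intros w Hw. destruct (Rle_dec w p) as [Hwp | Hwp].
  - rewrite Rmin_left by lra. replace (r * w + (1 - r) * w) with w by ring. apply Hpi_P. lra.
  - rewrite Rmin_right by lra.
    destruct Hor as [Hg_fwd | Hg_bwd];
      [apply (compressed_segment_forward Li Lj p q r a e b e' pi g gb)
      | apply (compressed_segment_backward Li Lj p q r a e b e' pi g gb)]; auto; lra.
Qed.

(** * Lifting a tightening step to the real line *)

Definition contracting_lift (Li Lj : R) (pi h : R -> R) (sg : R) : Prop :=
  is_sign sg /\
  (forall x, eqmod Lj (pi x) (h x)) /\
  (forall x y, x <= y -> 0 <= sg * (h y - h x) <= y - x) /\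
  (forall x, h (x + Li) = h x + sg * Lj).

Section Residue.
Variable Li : R.
Hypothesis HLi : 0 < Li.

Definition turns (v : R) : Z := Int_part (v / Li).
Definition residue (v : R) : R := v - IZR (turns v) * Li.

Lemma residue_range v : 0 <= residue v < Li.
Proof.
  unfold residue, turns. destruct (base_Int_part (v / Li)) as [A B].
  assert (v = (v / Li) * Li) by (field; lra). split; nra.
Qed.

Lemma turns_add_period v : turns (v + Li) = (turns v + 1)%Z.
Proof.
  unfold turns. replace ((v + Li) / Li) with (v / Li + 1) by (field; lra).
  symmetry. apply Int_part_spec. rewrite plus_IZR.
  destruct (base_Int_part (v / Li)). lra.
Qed.

Lemma residue_add_period v : residue (v + Li) = residue v.
Proof. unfold residue. rewrite turns_add_period, plus_IZR. ring. Qed.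

Lemma residue_decomp v : v = IZR (turns v) * Li + residue v.
Proof. unfold residue. ring. Qed.

Lemma turns_le v v' : v <= v' -> (turns v <= turns v')%Z.
Proof.
  intros H. pose proof (residue_range v). pose proof (residue_range v').
  unfold residue in *. apply Z.nlt_ge. intros Hlt.
  assert (IZR (turns v') + 1 <= IZR (turns v)) by (rewrite <- plus_IZR; apply IZR_le; lia).
  nra.
Qed.

End Residue.

Section Compression.
Variables (Li p r : R).
Hypotheses (HLi : 0 < Li) (Hp : 0 <= p <= Li) (Hr : 0 <= r <= 1).

(* [v] with each lifted copy of [[p, Li]] collapsed to a point *)
Definition plateau (v : R) : R := IZR (turns Li v) * p + Rmin (residue Li v) p.
Definition compression (v : R) : R := r * v + (1 - r) * plateau v.

Lemma plateau_mono v v' : v <= v' -> 0 <= plateau v' - plateau v <= v' - v.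
Proof.
  intros H. pose proof (turns_le Li HLi v v' H) as HN.
  pose proof (residue_range Li HLi v). pose proof (residue_range Li HLi v').
  pose proof (residue_decomp Li v). pose proof (residue_decomp Li v').
  unfold plateau.
  destruct (Z.eq_dec (turns Li v) (turns Li v')) as [E | E].
  - rewrite E in *. unfold Rmin; repeat destruct Rle_dec; lra.
  - assert (Hm : 1 <= IZR (turns Li v') - IZR (turns Li v))
      by (rewrite <- minus_IZR; apply IZR_le; lia).
    set (m := IZR (turns Li v') - IZR (turns Li v)) in *.
    replace (IZR (turns Li v')) with (IZR (turns Li v) + m) in * by (unfold m; ring).
    unfold Rmin; repeat destruct Rle_dec; nra.
Qed.

Lemma compression_mono v v' : v <= v' -> 0 <= compression v' - compression v <= v' - v.
Proof. intros H. pose proof (plateau_mono v v' H). unfold compression. nra. Qed.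

Lemma compression_add_period v :
  compression (v + Li) = compression v + (r * Li + (1 - r) * p).
Proof.
  unfold compression, plateau.
  rewrite (turns_add_period Li HLi), (residue_add_period Li HLi), plus_IZR. ring.
Qed.

Lemma compression_turns v : compression v =
  IZR (turns Li v) * (r * Li + (1 - r) * p) + (r * residue Li v + (1 - r) * Rmin (residue Li v) p).
Proof.
  unfold compression, plateau. set (n := IZR (turns Li v)). set (w := residue Li v).
  replace v with (n * Li + w) at 1 by (unfold n, w, residue; ring). ring.
Qed.

End Compression.

Lemma step_formula_lift Li Lj p r a e b e' pi : 0 < Li -> 0 <= p <= Li -> 0 <= r <= 1 ->
  is_sign e -> is_sign e' -> Lj = r * Li + (1 - r) * p ->
  (forall x y, eqmod Li x y -> eqmod Lj (pi x) (pi y)) ->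
  (forall w, 0 <= w < Li ->
     eqmod Lj (pi (a + e * w)) (b + e' * (r * w + (1 - r) * Rmin w p))) ->
  contracting_lift Li Lj pi (fun x => b + e' * compression Li p r (e * (x - a))) (e * e').
Proof.
  intros HLi Hp Hr He He' ELj Hwd Hform.
  split; [apply is_sign_mul; assumption | split; [| split]].
  - intros x. set (v := e * (x - a)).
    pose proof (residue_range Li HLi v) as Hw. pose proof (residue_decomp Li v) as Hv.
    apply eqmod_trans with (pi (a + e * residue Li v)).
    { apply Hwd.
      assert (Hx : x = a + e * v)
        by (unfold v; rewrite <- Rmult_assoc, is_sign_sq; [ring | exact He]).
      destruct He as [-> | ->]; [exists (turns Li v) | exists (- turns Li v)%Z];
        rewrite ?opp_IZR; lra. }
    apply eqmod_trans with (b + e' * (r * residue Li v + (1 - r) * Rmin (residue Li v) p));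
      [apply Hform, Hw |].
    rewrite (compression_turns Li p r v), <- ELj.
    destruct He' as [-> | ->]; [exists (- turns Li v)%Z | exists (turns Li v)];
      rewrite ?opp_IZR; lra.
  - intros x y Hxy. destruct He as [-> | ->].
    + pose proof (compression_mono Li p r HLi Hp Hr (1 * (x - a)) (1 * (y - a)) ltac:(lra)).
      destruct He' as [-> | ->]; lra.
    + pose proof (compression_mono Li p r HLi Hp Hr (-1 * (y - a)) (-1 * (x - a)) ltac:(lra)).
      destruct He' as [-> | ->]; lra.
  - intros x. destruct He as [-> | ->].
    + replace (1 * (x + Li - a)) with (1 * (x - a) + Li) by ring.
      rewrite (compression_add_period Li p r HLi), <- ELj. ring.
    + pose proof (compression_add_period Li p r HLi (-1 * (x + Li - a))) as E.
      replace (-1 * (x + Li - a) + Li) with (-1 * (x - a)) in E by ring.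
      rewrite <- ELj in E. rewrite E. ring.
Qed.

Lemma shift_mult_Z (f : R -> R) a b : (forall x, f (x + a) = f x + b) ->
  forall x n, f (x + IZR n * a) = f x + IZR n * b.
Proof.
  intros Hf.
  assert (Hnat : forall m x, f (x + INR m * a) = f x + INR m * b).
  { induction m as [| m IH]; intros x.
    - simpl. rewrite !Rmult_0_l, !Rplus_0_r. reflexivity.
    - rewrite S_INR. replace (x + (INR m + 1) * a) with (x + INR m * a + a) by ring.
      rewrite Hf, IH. ring. }
  intros x n. destruct (Z_le_gt_dec 0 n).
  - rewrite <- (Z2Nat.id n), <- INR_IZR_INZ by lia. apply Hnat.
  - pose proof (Hnat (Z.to_nat (- n)) (x + IZR n * a)) as E.
    rewrite INR_IZR_INZ, Z2Nat.id, opp_IZR in E by lia.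
    replace (x + IZR n * a + - IZR n * a) with x in E by ring. lra.
Qed.

Lemma contracting_lift_shift Li Lj pi h sg x n : contracting_lift Li Lj pi h sg ->
  h (x + IZR n * Li) = h x + IZR n * (sg * Lj).
Proof. intros [_ [_ [_ Hper]]]. apply shift_mult_Z, Hper. Qed.

Lemma contracting_lift_wd Li Lj pi h sg x y : contracting_lift Li Lj pi h sg ->
  eqmod Li x y -> eqmod Lj (pi x) (pi y).
Proof.
  intros Hl [k Hk]. pose proof Hl as [Hsg [Hpi _]].
  apply eqmod_trans with (h x); [apply Hpi |].
  apply eqmod_trans with (h y); [| apply eqmod_sym, Hpi].
  replace x with (y + IZR k * Li) by lra. rewrite (contracting_lift_shift Li Lj pi h sg y k Hl).
  destruct Hsg as [-> | ->]; [exists k | exists (- k)%Z]; rewrite ?opp_IZR; ring.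
Qed.

Lemma tightening_step_lift L0 Li Lj p q qb iota phi pi k : 0 < L0 -> 0 < Li -> 0 < Lj ->
  tightening_step L0 Li Lj p q qb iota phi pi k -> exists h sg, contracting_lift Li Lj pi h sg.
Proof.
  intros H0 Hi Hj Hstep. destruct k.
  - pose proof Hstep as [_ [_ [_ [_ [_ [_ [_ [Hwd _]]]]]]]].
    destruct (tightening_step_formula L0 Li Lj p q qb iota phi pi H0 Hi Hj Hstep)
      as [a [e [b [e' [r [He [He' [Hr [Hp [_ [ELj Hform]]]]]]]]]]].
    eexists. eexists. exact (step_formula_lift Li Lj p r a e b e' pi Hi Hp Hr He He' ELj Hwd Hform).
  - destruct Hstep as [-> [_ [_ Hpi]]]. exists (fun x => x), 1.
    split; [left; reflexivity | split; [exact Hpi | split; intros; lra]].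
Qed.

Lemma tightening_step_lengths L0 Li Lj p q qb iota phi pi k : 0 < L0 -> 0 < Li -> 0 < Lj ->
  tightening_step L0 Li Lj p q qb iota phi pi k -> 0 <= q /\ Lj <= Li /\ Li - q <= Lj.
Proof.
  intros H0 Hi Hj Hstep. destruct k.
  - destruct (tightening_step_formula L0 Li Lj p q qb iota phi pi H0 Hi Hj Hstep)
      as [a [e [b [e' [r [_ [_ [Hr [Hp [Hq [ELj _]]]]]]]]]]].
    split; [lra | split; nra].
  - destruct Hstep as [-> [-> _]]. lra.
Qed.

(** * The limit map *)

Lemma cv_const c : Un_cv (fun _ => c) c.
Proof.
  intros eps He. exists O. intros n _. unfold Rdist. rewrite Rminus_diag, Rabs_R0. exact He.
Qed.

Lemma cv_bounds (u : nat -> R) l a b : Un_cv u l -> (forall n, a <= u n <= b) -> a <= l <= b.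
Proof.
  intros Hu Hb. split.
  - eapply Rle_cv_lim; [| apply cv_const | exact Hu]. intros n. apply Hb.
  - eapply Rle_cv_lim; [| exact Hu | apply cv_const]. intros n. apply Hb.
Qed.

Lemma cv_min (u v : nat -> R) a b : Un_cv u a -> Un_cv v b ->
  Un_cv (fun n => Rmin (u n) (v n)) (Rmin a b).
Proof.
  intros Hu Hv eps He. destruct (Hu eps He) as [N1 H1], (Hv eps He) as [N2 H2].
  exists (max N1 N2). intros n Hn. specialize (H1 n ltac:(lia)). specialize (H2 n ltac:(lia)).
  unfold Rdist, Rmin in *. repeat destruct Rle_dec; split_Rabs; lra.
Qed.

Section LimitMap.
Variables (L : nat -> R) (pi h : nat -> R -> R) (sg : nat -> R) (Linf : R).
Hypothesis HL : forall i, 0 < L i.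
Hypothesis Hlift : forall i, contracting_lift (L i) (L (S i)) (pi i) (h i) (sg i).
Hypothesis HLinf : Un_cv L Linf.
Hypothesis HLinf_pos : 0 < Linf.

Fixpoint lift_up (i : nat) (x : R) : R :=
  match i with O => x | S j => h j (lift_up j x) end.

Fixpoint sign_up (i : nat) : R :=
  match i with O => 1 | S j => sg j * sign_up j end.

(* the oriented length in [S_i] of the image of the arc from [x] to [y] *)
Definition gap (i : nat) (x y : R) : R := sign_up i * (lift_up i y - lift_up i x).

Lemma sign_up_sign i : is_sign (sign_up i).
Proof.
  induction i as [| i IH]; simpl; [left; reflexivity |].
  apply is_sign_mul; [apply (Hlift i) | exact IH].
Qed.

Lemma pi_up_lift_up i x : eqmod (L i) (pi_up pi i x) (lift_up i x).
Proof.
  induction i as [| i IH]; simpl; [apply eqmod_refl |].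
  apply eqmod_trans with (pi i (lift_up i x));
    [exact (contracting_lift_wd _ _ _ _ _ _ _ (Hlift i) IH) | apply (Hlift i)].
Qed.

Lemma pi_up_eqmod i x y : eqmod (L 0) x y -> eqmod (L i) (pi_up pi i x) (pi_up pi i y).
Proof.
  intros E. induction i as [| i IH]; simpl; [exact E |].
  exact (contracting_lift_wd _ _ _ _ _ _ _ (Hlift i) IH).
Qed.

Lemma lift_up_period i x : lift_up i (x + L 0) = lift_up i x + sign_up i * L i.
Proof.
  induction i as [| i IH]; simpl; [ring |]. rewrite IH.
  destruct (sign_up_sign i) as [-> | ->].
  - rewrite (contracting_lift_shift _ _ _ _ _ (lift_up i x) 1 (Hlift i)). simpl. ring.
  - rewrite (contracting_lift_shift _ _ _ _ _ (lift_up i x) (-1) (Hlift i)). simpl. ring.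
Qed.

Lemma gap_step i x y : 0 <= gap i x y -> 0 <= gap (S i) x y <= gap i x y.
Proof.
  unfold gap. simpl. intros Hg. destruct (Hlift i) as [_ [_ [Hmono _]]].
  destruct (sign_up_sign i) as [E | E]; rewrite E in *.
  - pose proof (Hmono (lift_up i x) (lift_up i y) ltac:(lra)). lra.
  - pose proof (Hmono (lift_up i y) (lift_up i x) ltac:(lra)). lra.
Qed.

Lemma gap_bounds i x y : x <= y -> 0 <= gap i x y <= y - x.
Proof.
  intros Hxy. induction i as [| i IH]; [unfold gap; simpl; lra |].
  pose proof (gap_step i x y ltac:(lra)). lra.
Qed.

Lemma gap_cv x y : exists l, Un_cv (fun i => gap i x y) l.
Proof.
  assert (Hle : forall a b, a <= b -> exists l, Un_cv (fun i => gap i a b) l).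
  { intros a b Hab. destruct (decreasing_cv (fun i => gap i a b)) as [l Hl].
    - intros n. apply gap_step, gap_bounds, Hab.
    - exists 0. intros z [n ->]. unfold opp_seq. pose proof (gap_bounds n a b Hab). lra.
    - exists l. exact Hl. }
  destruct (Rle_dec x y) as [Hxy | Hxy]; [apply Hle, Hxy |].
  destruct (Hle y x ltac:(lra)) as [l Hl]. exists (- l).
  apply Un_cv_ext with (fun i => - gap i y x); [intros n; unfold gap; ring | apply CV_opp, Hl].
Qed.

Definition limit_map (x : R) : R :=
  proj1_sig (constructive_indefinite_description _ (gap_cv 0 x)).

Lemma limit_map_gap x y : Un_cv (fun i => gap i x y) (limit_map y - limit_map x).
Proof.
  assert (Hcv : forall z, Un_cv (fun i => gap i 0 z) (limit_map z))
    by (intros z; unfold limit_map; destruct constructive_indefinite_description; assumption).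
  apply Un_cv_ext with (fun i => gap i 0 y - gap i 0 x); [intros n; unfold gap; ring |].
  apply CV_minus; apply Hcv.
Qed.

Lemma limit_map_mono x y : x <= y -> 0 <= limit_map y - limit_map x <= y - x.
Proof.
  intros Hxy. apply (cv_bounds _ _ _ _ (limit_map_gap x y)). intros n. apply gap_bounds, Hxy.
Qed.

Lemma limit_map_continuous : continuity limit_map.
Proof.
  intros x0. unfold continuity_pt, continue_in, limit1_in, limit_in. simpl. unfold Rdist.
  intros eps He. exists eps. split; [exact He |]. intros x [_ Hx].
  destruct (Rle_dec x0 x);
    [pose proof (limit_map_mono x0 x r) | pose proof (limit_map_mono x x0 ltac:(lra))];
    split_Rabs; lra.
Qed.

Lemma gap_period i x y : gap i x y + gap i y (x + L 0) = L i.
Proof.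
  unfold gap. rewrite lift_up_period.
  replace (sign_up i * (lift_up i y - lift_up i x) +
           sign_up i * (lift_up i x + sign_up i * L i - lift_up i y))
    with (sign_up i * sign_up i * L i) by ring.
  rewrite is_sign_sq by apply sign_up_sign. ring.
Qed.

Lemma limit_map_period x : limit_map (x + L 0) = limit_map x + Linf.
Proof.
  apply Rplus_eq_reg_r with (- limit_map x).
  apply (UL_sequence (fun i => gap i x (x + L 0))); [apply limit_map_gap |].
  replace (limit_map x + Linf + - limit_map x) with Linf by ring.
  apply Un_cv_ext with L; [| exact HLinf].
  intros i. rewrite <- (gap_period i x x). unfold gap. ring.
Qed.

Lemma limit_map_eqmod x y : eqmod (L 0) x y -> eqmod Linf (limit_map x) (limit_map y).
Proof.
  intros [k Hk]. exists k. replace x with (y + IZR k * L 0) by lra.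
  rewrite (shift_mult_Z limit_map (L 0) Linf limit_map_period). ring.
Qed.

Lemma cdist_pi_up_gap i x y : x <= y <= x + L 0 ->
  cdist (L i) (pi_up pi i x) (pi_up pi i y) = Rmin (gap i x y) (L i - gap i x y).
Proof.
  intros Hxy.
  assert (Hb : 0 <= gap i x y <= L i).
  { pose proof (gap_bounds i x y ltac:(lra)). pose proof (gap_bounds i y (x + L 0) ltac:(lra)).
    pose proof (gap_period i x y). lra. }
  rewrite <- (cdist_on_interval (L i) _ (HL i) Hb).
  rewrite (cdist_eqmod (L i) _ _ _ _ (HL i) (pi_up_lift_up i x) (pi_up_lift_up i y)).
  rewrite cdist_sym, cdist_diff by apply HL. unfold gap.
  destruct (sign_up_sign i) as [-> | ->].
  - f_equal. ring.
  - rewrite <- cdist_opp by apply HL. f_equal. ring.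
Qed.

Lemma cdist_limit_map x y : x <= y <= x + L 0 ->
  cdist Linf (limit_map x) (limit_map y) =
  Rmin (limit_map y - limit_map x) (Linf - (limit_map y - limit_map x)).
Proof.
  intros Hxy.
  assert (Hb : 0 <= limit_map y - limit_map x <= Linf).
  { pose proof (limit_map_mono x y ltac:(lra)). pose proof (limit_map_mono y (x + L 0) ltac:(lra)).
    rewrite limit_map_period in *. lra. }
  rewrite <- (cdist_on_interval Linf _ HLinf_pos Hb), cdist_sym, cdist_diff by exact HLinf_pos.
  reflexivity.
Qed.

Lemma cdist_pi_up_cv x y :
  Un_cv (fun i => cdist (L i) (pi_up pi i x) (pi_up pi i y))
        (cdist Linf (limit_map x) (limit_map y)).
Proof.
  destruct (eqmod_representative (L 0) x y (HL 0)) as [y' [Ey Hy']].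
  rewrite (cdist_eqmod Linf _ _ _ (limit_map y') HLinf_pos (eqmod_refl _ _)
             (limit_map_eqmod y y' Ey)).
  apply Un_cv_ext with (fun i => Rmin (gap i x y') (L i - gap i x y')).
  - intros i. rewrite (cdist_eqmod (L i) _ (pi_up pi i x) _ (pi_up pi i y') (HL i) (eqmod_refl _ _)
                         (pi_up_eqmod i y y' Ey)).
    symmetry. apply cdist_pi_up_gap. lra.
  - rewrite cdist_limit_map by lra. apply cv_min; [apply limit_map_gap |].
    apply CV_minus; [exact HLinf | apply limit_map_gap].
Qed.

Lemma limit_map_surjective z : exists x, eqmod Linf (limit_map x) z.
Proof.
  destruct (eqmod_representative Linf (limit_map 0) z HLinf_pos) as [z' [Ez Hz']].
  destruct (IVT_cor (fun x => limit_map x - z') 0 (L 0)) as [x [_ Ex]].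
  - apply continuity_minus; [exact limit_map_continuous |].
    apply continuity_const. intros ? ?. reflexivity.
  - apply Rlt_le, HL.
  - cbv beta. replace (L 0) with (0 + L 0) by ring. rewrite limit_map_period. nra.
  - exists x. apply eqmod_sym. replace (limit_map x) with z' by lra. exact Ez.
Qed.

End LimitMap.

Lemma lengths_cv_pos (L q : nat -> R) s :
  (forall i, 0 <= q i /\ L (S i) <= L i /\ L i - q i <= L (S i)) ->
  Un_cv (fun n => sum_f_R0 q n) s -> s < L 0%nat -> exists Linf, Un_cv L Linf /\ 0 < Linf.
Proof.
  intros Hlen Hs HsL.
  assert (Hq : forall i, 0 <= q i) by apply Hlen.
  assert (Hdec : forall i, L (S i) <= L i) by apply Hlen.
  assert (Hlow : forall i, L i - q i <= L (S i)) by apply Hlen.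
  assert (Hsum : forall n, L 0%nat - sum_f_R0 q n <= L (S n)).
  { induction n as [| n IH]; simpl; [apply Hlow |]. pose proof (Hlow (S n)). lra. }
  assert (Hbound : forall n, L 0%nat - s <= L n).
  { intros [| n].
    - pose proof (sum_incr q 0 s Hs Hq). simpl in *. pose proof (Hq 0%nat). lra.
    - pose proof (Hsum n). pose proof (sum_incr q n s Hs Hq). lra. }
  destruct (decreasing_cv L) as [Linf HLinf]; [exact Hdec | |].
  { exists (s - L 0%nat). intros z [n ->]. unfold opp_seq. pose proof (Hbound n). lra. }
  exists Linf. split; [exact HLinf |].
  enough (L 0%nat - s <= Linf) by lra.
  eapply Rle_cv_lim; [exact Hbound | apply cv_const | exact HLinf].
Qed.

Lemma pseudometric_cdist_comp L0 Linf (F : R -> R) : 0 < Linf ->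
  (forall x x', eqmod L0 x x' -> eqmod Linf (F x) (F x')) ->
  pseudometric_on_circle L0 (fun x y => cdist Linf (F x) (F y)).
Proof.
  intros HL HF. repeat split; intros.
  - apply cdist_eqmod; [exact HL | apply HF; assumption | apply eqmod_refl].
  - apply cdist_nonneg, HL.
  - apply cdist_refl, HL.
  - apply cdist_sym, HL.
  - apply cdist_triangle, HL.
Qed.

Lemma tightening_sequence_lifts L kind p q qb iota phi pi :
  tightening_sequence L kind p q qb iota phi pi ->
  exists (h : nat -> R -> R) (sg : nat -> R),
    forall i, contracting_lift (L i) (L (S i)) (pi i) (h i) (sg i).
Proof.
  intros [HL Hst].
  destruct (functional_choice
              (fun i (hs : (R -> R) * R) =>
                 contracting_lift (L i) (L (S i)) (pi i) (fst hs) (snd hs)))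
    as [f Hf].
  { intros i.
    destruct (tightening_step_lift _ _ _ _ _ _ _ _ _ _ (HL 0%nat) (HL i) (HL (S i)) (Hst i))
      as [h [sg H]].
    exists (h, sg). exact H. }
  exists (fun i => fst (f i)), (fun i => snd (f i)). exact Hf.
Qed.

Theorem lemma4p1 (L : nat -> R) (kind : nat -> bool) (p q qb : nat -> R)
  (iota phi pi : nat -> R -> R) :
  tightening_sequence L kind p q qb iota phi pi ->
  completely_disjoint L kind p iota pi ->
  (exists s, Un_cv (fun n => sum_f_R0 q n) s /\ s < L 0%nat) ->
  exists Linf, Un_cv L Linf /\ 0 < Linf /\
  exists delta : R -> R -> R,
    (forall x y, Un_cv (fun i => cdist (L i) (pi_up pi i x) (pi_up pi i y))
                       (delta x y)) /\
    pseudometric_on_circle (L 0%nat) delta /\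
    (* the metric quotient of (S, delta) is isometric to R / Linf Z *)
    exists f : R -> R,
      (forall z, exists x, eqmod Linf (f x) z) /\
      (forall x y, cdist Linf (f x) (f y) = delta x y).
Proof.
  intros Hseq _ [s [Hs HsL]]. pose proof Hseq as [HL Hst].
  assert (Hlen : forall i, 0 <= q i /\ L (S i) <= L i /\ L i - q i <= L (S i))
    by (intros i; exact (tightening_step_lengths _ _ _ _ _ _ _ _ _ _
                           (HL 0%nat) (HL i) (HL (S i)) (Hst i))).
  destruct (lengths_cv_pos L q s Hlen Hs HsL) as [Linf [HLinf HLpos]].
  destruct (tightening_sequence_lifts L kind p q qb iota phi pi Hseq) as [h [sg Hlift]].
  set (F := limit_map L pi h sg Hlift).
  exists Linf. split; [exact HLinf | split; [exact HLpos |]].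
  exists (fun x y => cdist Linf (F x) (F y)). split; [| split].
  - intros x y. apply cdist_pi_up_cv; assumption.
  - apply pseudometric_cdist_comp; [exact HLpos |]. intros x x'. apply limit_map_eqmod; assumption.
  - exists F. split; [apply limit_map_surjective; assumption | reflexivity].
Qed.
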